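(* Assume the setting of the context and put $\widehat{x}_-=\frac{C_1\epsilon}{2}$, $\widehat{x}_c=\frac{C_1\epsilon}{2}(e^{-2C_0}+1)$, $\widehat{x}_+=\frac{2e^{2C_0}}{C_1\epsilon}$. Then for all sufficiently small $\epsilon>0$ and every $\sigma\in\Sigma$ (writing $Q=Q^\epsilon_\sigma$, $D=D_{\kappa_\sigma}$): (i) if $x\in[0,\infty)$ then $Q\cdot(D\cdot x)\notin[0,\widehat{x}_-)$; (ii) if $x\in[\widehat{x}_-,\infty)$ then $Q\cdot(D\cdot x)\notin[0,\widehat{x}_c)$; (iii) if $Q\cdot(D\cdot x)\in[0,\infty)$ then $x\notin[\widehat{x}_+,\infty)$.
   Context: Let $(\Sigma,\mathbf{p})$ be a probability space. For each $\sigma\in\Sigma$ and $\epsilon\in[-1,1]$ let real numbers $a_\sigma,b_\sigma$, $\kappa_\sigma>0$ and $\alpha^\epsilon_\sigma,\beta^\epsilon_\sigma,\gamma^\epsilon_\sigma,\delta^\epsilon_\sigma$ be given, with $A^\epsilon_\sigma=\begin{pmatrix}\alpha^\epsilon_\sigma&\beta^\epsilon_\sigma\\ \gamma^\epsilon_\sigma&\delta^\epsilon_\sigma\end{pmatrix}$. Assume that for all $\sigma$: $|\log(\kappa_\sigma)|\le C_0$, $a_\sigma-|b_\sigma|\ge C_1$, $a_\sigma+|b_\sigma|\le C_2$, and $\|A^\epsilon_\sigma\|\le C_3$ for $|\epsilon|\le1$, with constants $C_0,C_1,C_2,C_3\in(0,\infty)$. On $\mathbb{R}\cup\{\infty\}$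 define $D_{\kappa}\cdot x=\kappa^2x$ and $$Q^\epsilon_\sigma\cdot x=\frac{(1+\epsilon^2\alpha^\epsilon_\sigma)x+(a_\sigma-b_\sigma-\epsilon\beta^\epsilon_\sigma)\epsilon}{1+\epsilon^2\delta^\epsilon_\sigma-(a_\sigma+b_\sigma+\epsilon\gamma^\epsilon_\sigma)\epsilon x}$$ (Möbius actions with the usual conventions at $\infty$). *)

From Stdlib Require Import Reals.
Open Scope R_scope.

Inductive RP1 : Type := Fin (r : R) | Inf.

Definition mobius (a b c d : R) (x : RP1) : RP1 :=
  match x with
  | Fin r => if Req_EM_T (c * r + d) 0 then Inf else Fin ((a * r + b) / (c * r + d))
  | Inf => if Req_EM_T c 0 then Inf else Fin (a / c)
  end.

(* D_κ · x = κ^2 x  (the Möbius action of diag(κ, 1/κ)). *)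
Definition Dact (kappa : R) (x : RP1) : RP1 :=
  match x with Fin r => Fin (kappa ^ 2 * r) | Inf => Inf end.

Definition Qact (eps a b al be ga de : R) (x : RP1) : RP1 :=
  mobius (1 + eps ^ 2 * al) ((a - b - eps * be) * eps)
         (- ((a + b + eps * ga) * eps)) (1 + eps ^ 2 * de) x.

Definition in_Ico (lo hi : R) (x : RP1) : Prop :=
  match x with Fin r => lo <= r < hi | Inf => False end.

Definition in_Ici (lo : R) (x : RP1) : Prop :=
  match x with Fin r => lo <= r | Inf => False end.

Definition mat_norm (al be ga de : R) : R :=
  sqrt (al ^ 2 + be ^ 2 + ga ^ 2 + de ^ 2).

(* Write y = κ² x and Q·y = (p y + u ε)/(q - v ε y). For small ε the Frobenius bound on A
   makes p, q close to 1 and u, v at least 7 C₁/8, while κ² ≥ e^(-2 C₀). For y ≥ 0 the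
   denominator is at most 9/8 and the numerator at least 7/8 (y + C₁ ε), which bounds every
   nonnegative value of Q·y from below; for y ≥ 2/(C₁ ε) the denominator is negative, so
   Q·y < 0. *)

From Stdlib Require Import Reals Lra Psatz.
Open Scope R_scope.

Lemma Rabs_le_sqrt x S : x ^ 2 <= S -> Rabs x <= sqrt S.
Proof.
  intros H. rewrite <- sqrt_Rsqr_abs. apply sqrt_le_1_alt. unfold Rsqr. lra.
Qed.

Lemma Rabs_le_mat_norm al be ga de :
  Rabs al <= mat_norm al be ga de /\ Rabs be <= mat_norm al be ga de /\
  Rabs ga <= mat_norm al be ga de /\ Rabs de <= mat_norm al be ga de.
Proof.
  pose proof (pow2_ge_0 al); pose proof (pow2_ge_0 be);
  pose proof (pow2_ge_0 ga); pose proof (pow2_ge_0 de).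
  unfold mat_norm. repeat split; apply Rabs_le_sqrt; lra.
Qed.

Lemma exp_le_exp_compat x y : x <= y -> exp x <= exp y.
Proof.
  intros [H | ->]; [left; exact (exp_increasing x y H) | right; reflexivity].
Qed.

Lemma exp_le_sqr_of_Rabs_ln_le k C :
  0 < k -> Rabs (ln k) <= C -> exp (- (2 * C)) <= k ^ 2.
Proof.
  intros Hk HC.
  replace (k ^ 2) with (exp (2 * ln k)).
  - apply exp_le_exp_compat. revert HC. unfold Rabs. destruct Rcase_abs; lra.
  - replace (2 * ln k) with (ln k + ln k) by ring.
    rewrite exp_plus, exp_ln by exact Hk. ring.
Qed.

Lemma div_not_in_Ico N Dn M lo :
  0 < N -> Dn <> 0 -> Dn <= M -> lo * M <= N -> ~ (0 <= N / Dn < lo).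
Proof.
  intros HN HD HM Hlo [H0 Hlt].
  destruct (Rlt_or_le Dn 0) as [Hneg | Hnn].
  - pose proof (Rdiv_pos_neg N Dn HN Hneg). lra.
  - assert (HN' : N = N / Dn * Dn) by (field; exact HD).
    nra.
Qed.

Lemma mobius_Fin_not_in_Ico a b c d y M lo :
  0 < a * y + b -> c * y + d <= M -> lo * M <= a * y + b ->
  ~ in_Ico 0 lo (mobius a b c d (Fin y)).
Proof.
  intros HN HM Hlo. unfold mobius.
  destruct Req_EM_T as [_ | HD]; [simpl; tauto |].
  exact (div_not_in_Ico _ _ _ _ HN HD HM Hlo).
Qed.

Lemma mobius_Fin_not_in_Ici a b c d y :
  0 < a * y + b -> c * y + d < 0 -> ~ in_Ici 0 (mobius a b c d (Fin y)).
Proof.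
  intros HN HD. unfold mobius.
  destruct Req_EM_T as [_ | _]; [simpl; tauto |].
  pose proof (Rdiv_pos_neg _ _ HN HD). simpl. lra.
Qed.

Section PerturbedAction.

Variables p q u v eps C1 : R.
Hypotheses (Heps : 0 < eps) (HC1 : 0 < C1)
  (Hp : 7 / 8 <= p) (Hq : q <= 9 / 8) (Hu : 7 * C1 / 8 <= u) (Hv : 7 * C1 / 8 <= v).

Local Notation act := (mobius p (u * eps) (- (v * eps)) q).

Lemma act_not_in_Ico E y :
  0 <= E <= 1 -> E * (C1 * eps / 2) <= y ->
  ~ in_Ico 0 (C1 * eps / 2 * (E + 1)) (act (Fin y)).
Proof.
  intros HE Hy.
  assert (Hy0 : 0 <= y) by (pose proof (Rmult_le_pos E (C1 * eps / 2)); nra).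
  assert (Hpy : 7 / 8 * y <= p * y) by nra.
  assert (Hue : 7 * C1 / 8 * eps <= u * eps) by nra.
  assert (Hvy : 0 <= v * eps * y) by (apply Rmult_le_pos; nra).
  apply mobius_Fin_not_in_Ico with (M := 9 / 8); nra.
Qed.

Lemma act_not_in_Ici y : 2 / (C1 * eps) <= y -> ~ in_Ici 0 (act (Fin y)).
Proof.
  intros Hy.
  assert (HCe : 0 < C1 * eps) by nra.
  assert (HCey : 2 <= C1 * eps * y).
  { apply Rmult_le_compat_l with (r := C1 * eps) in Hy; [| lra].
    replace (C1 * eps * (2 / (C1 * eps))) with 2 in Hy by (field; lra). exact Hy. }
  assert (Hy0 : 0 < y) by nra.
  assert (Hue : 7 * C1 / 8 * eps <= u * eps) by nra.
  assert (Hvy : 7 / 8 * (C1 * eps * y) <= v * eps * y) by nra.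
  apply mobius_Fin_not_in_Ici; nra.
Qed.

End PerturbedAction.

Lemma Qact_coeff_bounds eps A B al be ga de C1 C3 :
  0 < eps <= 1 -> 8 * eps * C3 <= Rmin C1 1 ->
  mat_norm al be ga de <= C3 -> A - Rabs B >= C1 ->
  7 / 8 <= 1 + eps ^ 2 * al /\ 1 + eps ^ 2 * de <= 9 / 8 /\
  7 * C1 / 8 <= A - B - eps * be /\ 7 * C1 / 8 <= A + B + eps * ga.
Proof.
  intros Heps Hsmall HA HAB.
  pose proof (Rmin_l C1 1); pose proof (Rmin_r C1 1).
  destruct (Rabs_le_mat_norm al be ga de) as (Hal & Hbe & Hga & Hde).
  assert (Hbound : forall x, Rabs x <= C3 -> - C3 <= x <= C3).
  { intros x Hx. revert Hx. unfold Rabs. destruct Rcase_abs; lra. }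
  assert (HB : - Rabs B <= B <= Rabs B).
  { unfold Rabs. destruct Rcase_abs; lra. }
  destruct (Hbound al ltac:(lra)), (Hbound be ltac:(lra)),
           (Hbound ga ltac:(lra)), (Hbound de ltac:(lra)).
  repeat split; nra.
Qed.

Definition eps_threshold C1 C3 := Rmin 1 (Rmin C1 1 / (8 * C3)).

Lemma eps_threshold_pos C1 C3 : 0 < C1 -> 0 < C3 -> 0 < eps_threshold C1 C3.
Proof.
  intros HC1 HC3. unfold eps_threshold.
  apply Rmin_pos; [lra | apply Rdiv_lt_0_compat; [apply Rmin_pos |]; lra].
Qed.

Lemma lt_eps_threshold C1 C3 eps :
  0 < C3 -> eps < eps_threshold C1 C3 -> eps <= 1 /\ 8 * eps * C3 <= Rmin C1 1.
Proof.
  intros HC3 Heps. unfold eps_threshold in Heps.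
  pose proof (Rmin_l 1 (Rmin C1 1 / (8 * C3))); pose proof (Rmin_r 1 (Rmin C1 1 / (8 * C3))).
  assert (Hmul : Rmin C1 1 = Rmin C1 1 / (8 * C3) * (8 * C3)) by (field; lra).
  split; nra.
Qed.

Lemma le_mul_of_exp_neg_le t K z r : 0 <= z -> exp (- t) <= K -> exp t * z <= r -> z <= K * r.
Proof.
  intros Hz HK Hr.
  replace z with (exp (- t) * (exp t * z)) at 1
    by (rewrite exp_Ropp; field; apply Rgt_not_eq, exp_pos).
  pose proof (exp_pos (- t)); pose proof (exp_pos t).
  apply Rmult_le_compat; nra.
Qed.

Theorem lemma2 (Sigma : Type)
  (a b kappa : Sigma -> R) (alpha beta gamma delta : Sigma -> R -> R)
  (C0 C1 C2 C3 : R)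
  (hC0 : 0 < C0) (hC1 : 0 < C1) (hC2 : 0 < C2) (hC3 : 0 < C3)
  (hkpos : forall s, 0 < kappa s)
  (hk : forall s, Rabs (ln (kappa s)) <= C0)
  (hab1 : forall s, a s - Rabs (b s) >= C1)
  (hab2 : forall s, a s + Rabs (b s) <= C2)
  (hA : forall s eps, Rabs eps <= 1 ->
          mat_norm (alpha s eps) (beta s eps) (gamma s eps) (delta s eps) <= C3) :
  exists eps0, 0 < eps0 /\
    forall eps, 0 < eps < eps0 -> forall s : Sigma,
      let xm := C1 * eps / 2 in
      let xc := C1 * eps / 2 * (exp (- (2 * C0)) + 1) in
      let xp := 2 * exp (2 * C0) / (C1 * eps) in
      let Q := Qact eps (a s) (b s) (alpha s eps) (beta s eps)
                        (gamma s eps) (delta s eps) in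
      let D := Dact (kappa s) in
      (forall x, in_Ici 0 x -> ~ in_Ico 0 xm (Q (D x))) /\
      (forall x, in_Ici xm x -> ~ in_Ico 0 xc (Q (D x))) /\
      (forall x, in_Ici 0 (Q (D x)) -> ~ in_Ici xp x).
Proof.
  exists (eps_threshold C1 C3).
  split; [exact (eps_threshold_pos C1 C3 hC1 hC3) |].
  intros eps [Heps Heps0] s xm xc xp Q D.
  destruct (lt_eps_threshold C1 C3 eps hC3 Heps0) as [Heps1 Hsmall].
  destruct (Qact_coeff_bounds eps (a s) (b s) (alpha s eps) (beta s eps) (gamma s eps)
              (delta s eps) C1 C3 (conj Heps Heps1) Hsmall
              (hA s eps ltac:(rewrite Rabs_pos_eq; lra)) (hab1 s)) as (Hp & Hq & Hu & Hv).
  pose proof (act_not_in_Ico _ _ _ _ _ _ Heps hC1 Hp Hq Hu Hv) as Hlow.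
  pose proof (act_not_in_Ici _ _ _ _ _ _ Heps hC1 Hp Hq Hu Hv) as Hhigh.
  pose proof (exp_le_sqr_of_Rabs_ln_le _ _ (hkpos s) (hk s)) as HK.
  pose proof (exp_pos (- (2 * C0))) as HE0.
  assert (HE1 : exp (- (2 * C0)) <= 1) by (rewrite <- exp_0; apply exp_le_exp_compat; lra).
  assert (HCe : 0 < C1 * eps) by nra.
  split; [| split].
  - intros [r |] Hr; [| contradiction]. unfold in_Ici in Hr.
    replace xm with (C1 * eps / 2 * (0 + 1)) by (unfold xm; ring).
    apply Hlow; [lra |]. rewrite Rmult_0_l. apply Rmult_le_pos; lra.
  - intros [r |] Hr; [| contradiction]. unfold in_Ici, xm in Hr.
    apply Hlow; [lra |]. apply Rmult_le_compat; lra.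
  - intros [r |] HQ Hr; [| contradiction]. unfold in_Ici, xp in Hr.
    revert HQ. apply Hhigh, (le_mul_of_exp_neg_le (2 * C0)); [| exact HK |].
    + apply Rlt_le, Rdiv_lt_0_compat; lra.
    + unfold Rdiv in *. lra.
Qed.
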